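(* Let $A$ be a normal tensor with bond dimension $D_{\mathbb{1}}$ and injectivity length $L_I$, and let $|\psi\rangle=|\psi_N(A)\rangle$ be the translationally invariant MPS it generates on $N$ sites. Suppose $|\psi\rangle$ has the exact MPS-up$_{0,D}$ property and $N > L_I(\log_2 D + 1)$. Then $|\psi\rangle$ is a product state, $|\psi\rangle = |\phi\rangle^{\otimes N}$ for some $|\phi\rangle\in\mathbb{C}^d$.
   Context: An MPS on $N$ sites with physical dimension $d$ is $|\psi\rangle=\sum_{i_1,\dots,i_N=1}^d \mathrm{Tr}[A^{[1],i_1}\cdots A^{[N],i_N}]|i_1\dots i_N\rangle$, where $A^{[n],i}$ are $D_n\times D_{n+1}$ complex matrices ($D_{N+1}=D_1$); it is translationally invariant (TI), written $|\psi_N(A)\rangle$, if all $A^{[n]}=A$ with $A^i\in\mathcal{M}_{D_{\mathbb{1}}}(\mathbb{C})$. A tensor $A$ is normal if the matrices $\{A^i\}$ have no nontrivial common invariant subspace and the completely positive map $\mathcal{E}(X)=\sum_i A^iX(A^i)^\dagger$ has a unique eigenvalue of largest magnitude, equal to $1$. Blocking $L$ sites gives the tensor with matrices $A^{i_1}\cdots A^{i_L}$ indexed by $(i_1,\dots,i_L)$; a tensor is injective if the map $X\mapsto\sum_{i}\mathrm{Tr}[XA^{i}]|i\rangle$ from $\mathcal{M}_{D_{\mathbb{1}}}(\mathbb{C})$ to the physical space is injective. The injectivity length $L_I$ of a normal tensor is the number of sites after whose blocking the tensor becomes injective (injectivity then persists for larger blocks). A state $|\psi\rangle\in(\mathbb{C}^d)^{\otimes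 N}$ is an MPS-up$_{\varepsilon,D}$ if for every permutation $\pi$ of the $N$ sites, with $U_\pi$ the unitary permuting the tensor factors accordingly, there is an MPS state (open boundary, bond dimensions at most $D$) $|\psi_\pi\rangle$ with $\|U_\pi|\psi\rangle-|\psi_\pi\rangle\|\le\varepsilon$; equivalently, for every bipartition of the sites there is a state $\varepsilon$-close to $|\psi\rangle$ with Schmidt rank at most $D$ across it. Exact MPS-up means $\varepsilon=0$, i.e. Schmidt rank at most $D$ across every bipartition. *)

From mathcomp Require Import all_boot all_algebra.
From mathcomp Require Import complex.
From mathcomp Require Import reals exp.
Set Implicit Arguments. Unset Strict Implicit. Unset Printing Implicit Defensive.
Import GRing.Theory Num.Theory.
Local Open Scope ring_scope.

(* A tensor with physical dimension d and bond dimension D1: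
   the family of D1 x D1 complex matrices A^i, i < d. *)
Definition tensor (R : realType) (d D1 : nat) := 'I_d -> 'M[R[i]]_D1.

Definition adjmx (R : realType) (n : nat) (M : 'M[R[i]]_n) : 'M[R[i]]_n :=
  (map_mx (fun x : R[i] => x^*) M)^T.

(* A subspace W is encoded (mxalgebra, row convention)
   as the row space of U; A^i W <= W for column vectors means
   U *m (A^i)^T <= U. *)
Definition has_nontrivial_common_invariant_subspace (R : realType) (d D1 : nat)
    (A : tensor R d D1) : Prop :=
  exists U : 'M[R[i]]_D1,
    [/\ (0 < \rank U)%N, (\rank U < D1)%N &
        forall i, (U *m (A i)^T <= U)%MS].

Definition transfer_map (R : realType) (d D1 : nat) (A : tensor R d D1)
    (X : 'M[R[i]]_D1) : 'M[R[i]]_D1 :=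
  \sum_(i < d) (A i *m X *m adjmx (A i)).

Definition is_eigenvalue_of_map (R : realType) (n : nat)
    (E : 'M[R[i]]_n -> 'M[R[i]]_n) (lam : R[i]) : Prop :=
  exists2 X : 'M[R[i]]_n, X != 0 & E X = lam *: X.

Definition unique_largest_eigenvalue_one (R : realType) (n : nat)
    (E : 'M[R[i]]_n -> 'M[R[i]]_n) : Prop :=
  is_eigenvalue_of_map E 1 /\
  forall lam, is_eigenvalue_of_map E lam -> lam != 1 -> `|lam| < 1.

Definition normal_tensor (R : realType) (d D1 : nat) (A : tensor R d D1) : Prop :=
  ~ has_nontrivial_common_invariant_subspace A /\
  unique_largest_eigenvalue_one (transfer_map A).

Definition block_tensor (R : realType) (d D1 : nat) (A : tensor R d D1) (L : nat)
    (c : {ffun 'I_L -> 'I_d}) : 'M[R[i]]_D1 :=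
  \prod_(k < L) A (c k).
Arguments block_tensor {R d D1} A L c.

(* injectivity of X |-> sum_i Tr[X B^i] |i> for a tensor B with index type I *)
Definition injective_tensor (R : realType) (I : finType) (D1 : nat)
    (B : I -> 'M[R[i]]_D1) : Prop :=
  forall X : 'M[R[i]]_D1, (forall c, \tr (X *m B c) = 0) -> X = 0.

Definition injectivity_length (R : realType) (d D1 : nat) (A : tensor R d D1)
    (LI : nat) : Prop :=
  [/\ (0 < LI)%N, injective_tensor (block_tensor A LI) &
      forall L, (0 < L < LI)%N -> ~ injective_tensor (block_tensor A L)].

Definition config (N d : nat) := {ffun 'I_N -> 'I_d}.

Definition ti_mps (R : realType) (d D1 : nat) (A : tensor R d D1) (N : nat)
    (c : config N d) : R[i] :=
  \tr (\prod_(k < N) A (c k)).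
Arguments ti_mps {R d D1} A N c.

Definition merge_config (N d : nat) (S : {set 'I_N}) (a b : config N d) : config N d :=
  [ffun k => if k \in S then a k else b k].

(* Rows and columns are indexed by
   full configurations (enumerated), of which only the restriction to S
   (resp. to the complement) matters; duplicated rows/columns do not change
   the rank, so this is the usual Schmidt rank. *)
Definition schmidt_rank (R : realType) (N d : nat) (psi : config N d -> R[i])
    (S : {set 'I_N}) : nat :=
  \rank (\matrix_(a < #|{: config N d}|, b < #|{: config N d}|)
           psi (merge_config S (enum_val a) (enum_val b))).

Definition exact_MPS_up (R : realType) (N d : nat) (psi : config N d -> R[i])
    (D : nat) : Prop :=
  forall S : {set 'I_N}, (schmidt_rank psi S <= D)%N.

Definition is_product_power (R : realType) (N d : nat) (psi : config N d -> R[i]) : Prop :=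
  exists phi : 'I_d -> R[i], forall c : config N d, psi c = \prod_(k < N) phi (c k).

Definition log2 (R : realType) (x : R) : R := ln x / ln 2.

From mathcomp Require Import all_boot all_algebra.
From mathcomp Require Import complex.
From mathcomp Require Import reals exp.
From mathcomp Require Import boolp order.
From mathcomp Require Import zify ring.
Set Implicit Arguments. Unset Strict Implicit. Unset Printing Implicit Defensive.
Import Order.TTheory GRing.Theory Num.Theory.
Local Open Scope ring_scope.

(* Cut the ring into windows of length [L = LI].  Injectivity says that on each window the
   products of the [A i] span all matrices, so by multilinearity any choice of matrices on
   whole windows is a linear combination of configurations.  Let [S] be the even windows among
   the first [m] ones ([m] odd).  Chains of matrix units through the [m - 1] internal cuts,
   with the even links fixed from the [S] side and the odd links from the other side, give an
   identity block of size [D1 ^ (m - 1)] in the coefficient matrix of the state across [S],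
   times the number of independent matrices carried by the leftover tail: one if it is empty,
   [D1 ^ 2] if it is at least a window long, and two otherwise, since a shorter tail of length
   [r] whose products were all proportional would make windows of length [L - r] injective,
   against the minimality of [L].  When [D1 >= 2] this exceeds [D < 2 ^ ((N - L) / L)];
   [D1 = 1] gives a product state, and normality excludes [D1 = 0]. *)

Section MatrixUnits.
Variables (F : comNzRingType) (n : nat).
Local Notation Mx := 'M[F]_n.

Lemma mxtrace_delta_mul (i j : 'I_n) (Z : Mx) : \tr (delta_mx i j *m Z) = Z j i.
Proof.
rewrite /mxtrace (bigD1 i) //= big1 ?addr0.
  rewrite mxE (bigD1 j) //= !mxE !eqxx mul1r big1 ?addr0 // => k nk.
  by rewrite !mxE (negbTE nk) andbF mul0r.
move=> l nl; rewrite mxE big1 // => k _.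
by rewrite !mxE (negbTE nl) mul0r.
Qed.

Lemma mxtrace_mul_sum (G Z : Mx) : \tr (G *m Z) = \sum_i \sum_j G j i * Z i j.
Proof. by rewrite /mxtrace exchange_big /=; apply: eq_bigr => j _; rewrite mxE. Qed.

Lemma prod_delta_mx m (a b : nat -> 'I_n) :
  \prod_(0 <= j < m.+1) (delta_mx (a j) (b j) : Mx) =
  (\prod_(0 <= j < m) ((b j == a j.+1)%:R : F)) *: delta_mx (a 0%N) (b m).
Proof.
elim: m => [|m IH]; first by rewrite big_nat1 big_geq // scale1r.
rewrite big_nat_recr //= IH big_nat_recr //= -mulmxE -scalemxAl.
rewrite mul_delta_mx_cond -scalerA; congr (_ *: _).
by case: eqP => _; rewrite ?mulr1n ?mulr0n ?scale1r ?scale0r.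
Qed.

Lemma prod_eq_ffun k (f g : {ffun 'I_k -> 'I_n}) :
  \prod_(j < k) ((f j == g j)%:R : F) = (f == g)%:R.
Proof.
case: eqP => [->|/eqP fg]; first by rewrite big1 // => j _; rewrite eqxx.
have [j fgj] : exists j, f j != g j.
  by apply/existsP; apply: contraR fg => /existsPn fg; apply/eqP/ffunP => j; apply/eqP/negPn.
by rewrite (bigD1 j) //= (negbTE fgj) mul0r.
Qed.

Variable i0 : 'I_n.

Definition chain_at k (f : {ffun 'I_k -> 'I_n}) (c : nat) : 'I_n :=
  if insub c.-1 is Some j then f j else i0.

(* [row_index lam x y] runs through [y, lam 0, ..., lam (m - 2), x]. *)
Definition row_index m (lam : {ffun 'I_m.-1 -> 'I_n}) (x y : 'I_n) (c : nat) : 'I_n :=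
  if c == 0%N then y else if c == m then x else chain_at lam c.

Definition row_link m (lam : {ffun 'I_m.-1 -> 'I_n}) x y j : Mx :=
  delta_mx (row_index lam x y j) (row_index lam x y j.+1).

Definition col_link k (mu : {ffun 'I_k -> 'I_n}) j : Mx :=
  delta_mx (chain_at mu j) (chain_at mu j.+1).

(* The even links carry the row data [lam], the odd ones the column data [mu]; the chain
   of matrix units only closes when the two agree. *)
Lemma alt_chain_prod m (lam mu : {ffun 'I_m.-1 -> 'I_n}) x y : odd m ->
  \prod_(0 <= j < m) (if odd j then col_link mu j else row_link lam x y j) =
  (lam == mu)%:R *: delta_mx y x.
Proof.
case: m lam mu => // k lam mu /= /negbTE k_even.
pose a j := if odd j then chain_at mu j else row_index lam x y j.
pose b j := if odd j then chain_at mu j.+1 else row_index lam x y j.+1.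
rewrite (eq_big_nat _ _ (F2 := fun j => delta_mx (a j) (b j))); last first.
  by move=> j _; rewrite /a /b /col_link /row_link; case: (odd j).
rewrite prod_delta_mx /a /b /= k_even /row_index /= eqxx; congr (_ *: _).
rewrite -prod_eq_ffun big_mkord; apply: eq_bigr => j _.
have lamE : chain_at lam j.+1 = lam j by rewrite /chain_at /= valK.
have muE : chain_at mu j.+1 = mu j by rewrite /chain_at /= valK.
have jk : (j.+1 == k.+1) = false by rewrite eqSS ltn_eqF.
by rewrite /= jk lamE muE; case: (odd j); rewrite // eq_sym.
Qed.

End MatrixUnits.
Arguments row_link {F n} i0 {m} lam x y j.
Arguments col_link {F n} i0 {k} mu j.

Section TraceDuality.
Variables (F : fieldType) (n : nat).
Local Notation Mx := 'M[F]_n.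

Lemma mxtrace_vec_mx (u : 'rV[F]_(n * n)) (M : Mx) :
  \tr ((vec_mx u)^T *m M) = \sum_j u 0 j * mxvec M 0 j.
Proof.
rewrite (reindex _ (curry_mxvec_bij n n)) /=.
rewrite (eq_bigr (fun p => u 0 (mxvec_index p.1 p.2) * mxvec M 0 (mxvec_index p.1 p.2)));
  last by case.
rewrite -(pair_bigA _ (fun a b => u 0 (mxvec_index a b) * mxvec M 0 (mxvec_index a b))) /=.
rewrite /mxtrace [RHS]exchange_big /=; apply: eq_bigr => a _; rewrite !mxE.
apply: eq_bigr => b _; rewrite mxE (mxvecE M b a); congr (_ * _).
by rewrite -{2}(vec_mxK u) (mxvecE (vec_mx u) b a).
Qed.

Lemma mxtrace_separating_span (I : finType) (B : I -> Mx) :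
  (forall X, (forall c, \tr (X *m B c) = 0) -> X = 0) ->
  forall Z, exists be : I -> F, Z = \sum_i be i *: B i.
Proof.
move=> sepB Z.
pose W : 'M[F]_(#|I|, n * n) := \matrix_(i, j) mxvec (B (enum_val i)) 0 j.
have fullW : row_full W.
  have -> : row_full W = row_free W^T by rewrite /row_free mxrank_tr.
  rewrite -kermx_eq0; apply: contraT => /rowV0Pn[v /sub_kermxP vW].
  suff /eqP : (vec_mx v)^T = 0 by rewrite trmx_eq0 vec_mx_eq0 => ->.
  apply: sepB => c; rewrite mxtrace_vec_mx.
  transitivity ((v *m W^T) 0 (enum_rank c)); last by rewrite vW mxE.
  by rewrite mxE; apply: eq_bigr => j _; rewrite !mxE enum_rankK.
have /submxP[a aW] := submx_full (mxvec Z) fullW.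
exists (fun i => a 0 (enum_rank i)).
rewrite -[Z]mxvecK aW mulmx_sum_row linear_sum /=.
rewrite (reindex (@enum_val I predT)) /=; last exact/onW_bij/enum_val_bij.
apply: eq_bigr => k _; rewrite enum_valK linearZ /=; congr (_ *: _).
by rewrite -[B _]mxvecK; congr vec_mx; apply/rowP => j; rewrite !mxE.
Qed.

Definition proportional (I : Type) (W : I -> Mx) := exists M, forall x, exists c, W x = c *: M.

Lemma proportional_of_minors (I : Type) (W : I -> Mx) :
  (forall x1 x2 i1 j1 i2 j2, W x1 i1 j1 * W x2 i2 j2 = W x2 i1 j1 * W x1 i2 j2) ->
  proportional W.
Proof.
move=> minor0.
have [[x1 [i1 [j1 W1ij]]]|W0] := pselect (exists x i j, W x i j != 0); last first.
  exists 0 => x; exists 0; rewrite scale0r; apply/matrixP => i j; rewrite mxE.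
  by apply: contra_notP W0 => /eqP Wij; exists x, i, j.
exists (W x1) => x; exists (W x i1 j1 / W x1 i1 j1); apply/matrixP => i2 j2.
by rewrite mxE -[W x i2 j2](mulKf W1ij) (minor0 x1 x i1 j1 i2 j2) mulrAC mulrC.
Qed.

(* A nonzero 2x2 minor of two members is inverted by functionals built from the matrix
   units at its entries. *)
Lemma not_proportional_dual_pair (I : Type) (W : I -> Mx) : ~ proportional W ->
  exists (x : bool -> I) (g : bool -> Mx), forall a b, \tr (g a *m W (x b)) = (a == b)%:R.
Proof.
move=> notW.
have [[x1 [x2 [i1 [j1 [i2 [j2]]]]]] del0|] := pselect (exists x1 x2 i1 j1 i2 j2,
  W x1 i1 j1 * W x2 i2 j2 - W x2 i1 j1 * W x1 i2 j2 != 0); last first.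
  move=> minor0; case: notW; apply: proportional_of_minors => x1 x2 i1 j1 i2 j2.
  by apply/eqP; rewrite -subr_eq0; apply: contra_notT minor0 => ?; exists x1, x2, i1, j1, i2, j2.
set del := _ - _ in del0.
exists (fun b => if b then x1 else x2), (fun a => if a then
    (W x2 i2 j2 / del) *: delta_mx j1 i1 - (W x2 i1 j1 / del) *: delta_mx j2 i2
  else (W x1 i1 j1 / del) *: delta_mx j2 i2 - (W x1 i2 j2 / del) *: delta_mx j1 i1).
rewrite /del in del0 *.
by move=> [] [] /=; rewrite mulmxBl raddfB /= -!scalemxAl !mxtraceZ !mxtrace_delta_mul;
  field.
Qed.

(* The [P x * W x] can only separate if the common direction [M] of the [W x] is
   invertible, and then the [P x] separate as well. *)
Lemma separating_proportional_factor (I : Type) (P W : I -> Mx) :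
  (forall Y, (forall x, \tr (Y *m (P x * W x)) = 0) -> Y = 0) -> proportional W ->
  forall X, (forall x, \tr (X *m P x) = 0) -> X = 0.
Proof.
move=> sepPW [M /choice[c WM]] X XP.
have trPM Y : (forall x, \tr (M *m Y *m P x) = 0) -> Y = 0.
  move=> MYP; apply: sepPW => x; rewrite WM -!mulmxE -!scalemxAr mxtraceZ.
  by rewrite mulmxA mxtrace_mulC mulmxA MYP mulr0.
have Munit : M \in unitmx.
  rewrite -row_free_unit /row_free -mxrank_tr -/(row_free M^T) -kermx_eq0 -trmx_eq0.
  apply/eqP/trPM => x.
  by rewrite -{1}[M]trmxK -trmx_mul mulmx_ker trmx0 !mul0mx mxtrace0.
by rewrite -(mulKVmx Munit X) (trPM (invmx M *m X)) ?mulmx0 // => x; rewrite mulKVmx.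
Qed.

End TraceDuality.

Section TIState.
Variables (R : realType) (d D1 N : nat) (A : tensor R d D1) (i0 : 'I_d).
Local Notation C := R[i].
Local Notation Mx := 'M[C]_D1.
Local Notation cfg := (config N d).

Definition site_mx (x : cfg) (k : nat) : Mx := if insub k is Some i then A (x i) else 1.

Definition seg_prod (B : nat -> Mx) s e : Mx := \prod_(s <= k < e) B k.

Definition ring_tr (B : nat -> Mx) : C := \tr (seg_prod B 0 N).

Definition mask (P : pred nat) (B Y : nat -> Mx) k := if P k then B k else Y k.

(* Placing the matrices [B k] on the sites [P] acts on the state like a fixed linear
   combination of configurations of those sites. *)
Definition realizable (P : pred nat) (B : nat -> Mx) :=
  exists p : cfg -> C, forall Y,
    \sum_x p x * ring_tr (mask P (site_mx x) Y) = ring_tr (mask P B Y).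

Definition seg_span s e (Z : Mx) :=
  exists al : cfg -> C, Z = \sum_x al x *: seg_prod (site_mx x) s e.

Definition patch (J : pred nat) (x x' : cfg) : cfg :=
  [ffun i => if J (val i) then x' i else x i].

Lemma site_mx_patch J x x' k :
  site_mx (patch J x x') k = if J k then site_mx x' k else site_mx x k.
Proof.
rewrite /site_mx; case: insubP => [i _ <-|_]; last by case: (J k).
by rewrite ffunE; case: (J _).
Qed.

Lemma site_mxE x (i : 'I_N) : site_mx x i = A (x i).
Proof. by rewrite /site_mx valK. Qed.

Lemma site_mx_out x k : (N <= k)%N -> site_mx x k = 1.
Proof. by move=> kN; rewrite /site_mx insubF // ltnNge kN. Qed.

Lemma seg_prod_cat (B : nat -> Mx) s m e : (s <= m <= e)%N ->
  seg_prod B s e = seg_prod B s m * seg_prod B m e.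
Proof. by move=> /andP[sm me]; rewrite /seg_prod (big_cat_nat sm me). Qed.

Lemma eq_seg_prod (B B' : nat -> Mx) s e : (forall k, (s <= k < e)%N -> B k = B' k) ->
  seg_prod B s e = seg_prod B' s e.
Proof. exact: eq_big_nat. Qed.

Lemma seg_prod_shift (B : nat -> Mx) s l : seg_prod B s (s + l) = \prod_(k < l) B (s + k)%N.
Proof.
rewrite /seg_prod -{1}(add0n s) big_addn addKn big_mkord.
by apply: eq_bigr => k _; rewrite addnC.
Qed.

Lemma ring_tr_split (B : nat -> Mx) s e : (s <= e <= N)%N ->
  ring_tr B = \tr (seg_prod B 0 s * seg_prod B s e * seg_prod B e N).
Proof.
move=> /andP[se eN]; rewrite /ring_tr (@seg_prod_cat _ 0 s) ?(leq_trans se eN) //.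
by rewrite (@seg_prod_cat _ s e) ?se ?mulrA.
Qed.

Lemma mask_predC (P : pred nat) (B Y : nat -> Mx) : mask (predC P) B Y = mask P Y B.
Proof. by apply: funext => k; rewrite /mask /=; case: (P k). Qed.

Lemma ti_mps_ring_tr (P : pred nat) (S : {set 'I_N}) x y :
  (forall i : 'I_N, (i \in S) = P i) ->
  ti_mps A N (merge_config S x y) = ring_tr (mask P (site_mx x) (site_mx y)).
Proof.
move=> SP; rewrite /ti_mps /ring_tr /seg_prod big_mkord; congr (\tr _).
by apply: eq_bigr => i _; rewrite /mask !site_mxE ffunE SP; case: (P i).
Qed.

Lemma schmidt_rank_ge_pairing (S : {set 'I_N}) (P : pred nat) (K : finType)
    (p q : K -> cfg -> C) :
  (forall i : 'I_N, (i \in S) = P i) ->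
  (forall a b, \sum_x \sum_y p a x * q b y * ring_tr (mask P (site_mx x) (site_mx y))
      = (a == b)%:R) ->
  (#|K| <= schmidt_rank (ti_mps A N) S)%N.
Proof.
move=> SP pq; rewrite /schmidt_rank; set M := \matrix_(a, b) _.
pose Pm : 'M[C]_(#|K|, #|{: cfg}|) := \matrix_(i, a) p (enum_val i) (enum_val a).
pose Qm : 'M[C]_(#|{: cfg}|, #|K|) := \matrix_(b, j) q (enum_val j) (enum_val b).
have PMQ : Pm *m M *m Qm = 1%:M.
  apply/matrixP => i j; rewrite !mxE.
  under eq_bigr do rewrite !mxE mulr_suml.
  rewrite exchange_big /= -(inj_eq enum_val_inj) -pq.
  rewrite [RHS](reindex (@enum_val _ predT)) /=; last exact/onW_bij/enum_val_bij.
  apply: eq_bigr => a _.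
  rewrite [RHS](reindex (@enum_val _ predT)) /=; last exact/onW_bij/enum_val_bij.
  by apply: eq_bigr => b _; rewrite !mxE (ti_mps_ring_tr _ _ SP) mulrAC.
rewrite -[#|K|](mxrank1 C) -PMQ.
exact: leq_trans (mxrankM_maxl _ _) (mxrankM_maxr _ _).
Qed.

Lemma realizable_site_mx (P : pred nat) x : realizable P (site_mx x).
Proof.
exists (fun x' => (x' == x)%:R) => Y.
rewrite (bigD1 x) //= eqxx mul1r big1 ?addr0 // => y /negbTE ->.
by rewrite mul0r.
Qed.

Lemma eq_realizable (P : pred nat) (B B' : nat -> Mx) : (forall k, P k -> B k = B' k) ->
  realizable P B -> realizable P B'.
Proof.
move=> BB' [p pB]; exists p => Y; rewrite pB; congr ring_tr.
by apply: funext => k; rewrite /mask; case: ifP => // /BB'.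
Qed.

Lemma seg_span_site_mx s e x : seg_span s e (seg_prod (site_mx x) s e).
Proof.
exists (fun x' => (x' == x)%:R).
rewrite (bigD1 x) //= eqxx scale1r big1 ?addr0 // => y /negbTE ->.
by rewrite scale0r.
Qed.

Lemma seg_span_sum s e (I : finType) (w : I -> C) (Z : I -> Mx) :
  (forall i, seg_span s e (Z i)) -> seg_span s e (\sum_i w i *: Z i).
Proof.
move=> /choice[al alZ]; exists (fun x => \sum_i w i * al i x).
under [RHS]eq_bigr do rewrite scaler_suml.
rewrite [RHS]exchange_big /=; apply: eq_bigr => i _.
by rewrite alZ scaler_sumr; apply: eq_bigr => x _; rewrite scalerA.
Qed.

Lemma seg_span_mul s m e Z1 Z2 : (s <= m <= e)%N ->
  seg_span s m Z1 -> seg_span m e Z2 -> seg_span s e (Z1 * Z2).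
Proof.
move=> /andP[sm me] [a ->] [b ->]; rewrite mulr_suml.
under eq_bigr do rewrite mulr_sumr.
under eq_bigr do under eq_bigr do rewrite -mulmxE -scalemxAl -scalemxAr scalerA mulmxE.
rewrite pair_big /=; apply: seg_span_sum => -[x y] /=.
have -> : seg_prod (site_mx x) s m * seg_prod (site_mx y) m e =
          seg_prod (site_mx (patch (fun k => (k < m)%N) y x)) s e.
  rewrite (@seg_prod_cat _ s m e) ?sm ?me //.
  by congr (_ * _); apply: eq_seg_prod => k /andP[sk ke];
    rewrite site_mx_patch ?ke // ltnNge sk.
exact: seg_span_site_mx.
Qed.

Lemma ring_tr_seg (G H : nat -> Mx) s e : (s <= e <= N)%N ->
  (forall k, ~~ (s <= k < e)%N -> G k = H k) ->
  ring_tr G = \tr (seg_prod H 0 s * seg_prod G s e * seg_prod H e N).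
Proof.
move=> seN GH; rewrite (ring_tr_split _ seN); case/andP: seN => se eN.
by congr (\tr (_ * _ * _)); apply: eq_seg_prod => k /andP[? ?]; apply: GH; lia.
Qed.

Lemma seg_prod_start (Z : Mx) (B : nat -> Mx) s e : (s < e)%N ->
  seg_prod (fun k => if (s <= k < e)%N then (if k == s then Z else 1) else B k) s e = Z.
Proof.
move=> se; rewrite /seg_prod big_ltn // leqnn se eqxx big1_seq ?mulr1 // => k.
by rewrite mem_index_iota => /andP[_ /andP[sk ke]]; rewrite ltnW // ke; case: eqP => //; lia.
Qed.

Lemma realizable_seg (P : pred nat) (B : nat -> Mx) s e Z : (s < e <= N)%N ->
  (forall k, (s <= k < e)%N -> P k) ->
  (forall x, realizable P (fun k => if (s <= k < e)%N then site_mx x k else B k)) ->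
  seg_span s e Z ->
  realizable P (fun k => if (s <= k < e)%N then (if k == s then Z else 1) else B k).
Proof.
move=> /andP[se eN] segP /choice[p pB] [al Zal].
have seN : (s <= e <= N)%N by rewrite ltnW.
exists (fun x => \sum_x' al x' * p x' x) => Y.
under eq_bigr do rewrite mulr_suml.
rewrite exchange_big /=.
under eq_bigr do (under eq_bigr do rewrite -mulrA; rewrite -mulr_sumr pB).
set H := mask P B Y.
have out_seg (F : nat -> Mx) k : ~~ (s <= k < e)%N ->
    mask P (fun k => if (s <= k < e)%N then F k else B k) Y k = H k.
  by rewrite /mask /H => /negbTE ->.
rewrite (ring_tr_seg seN (out_seg _)).
have -> : seg_prod (mask P (fun k => if (s <= k < e)%N then
    (if k == s then Z else 1) else B k) Y) s e = Z.
  by rewrite -[RHS](seg_prod_start Z B se); apply: eq_seg_prod => k ske; rewrite /mask segP.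
rewrite Zal mulr_sumr mulr_suml raddf_sum /=; apply: eq_bigr => x _.
rewrite (ring_tr_seg seN (out_seg _)).
have -> : seg_prod (mask P (fun k => if (s <= k < e)%N then site_mx x k else B k) Y) s e =
    seg_prod (site_mx x) s e.
  by apply: eq_seg_prod => k ske; rewrite /mask segP // ske.
by rewrite -!mulmxE -scalemxAr -scalemxAl mxtraceZ.
Qed.

Lemma seg_prod_site_mx_block s l x : (s + l <= N)%N ->
  seg_prod (site_mx x) s (s + l) =
  block_tensor A l [ffun k : 'I_l => if insub (s + k)%N is Some i then x i else i0].
Proof.
move=> slN; rewrite seg_prod_shift /block_tensor; apply: eq_bigr => k _.
have skN : (s + k < N)%N by have := ltn_ord k; lia.
by rewrite /site_mx ffunE insubT.
Qed.

Lemma block_tensor_seg_prod s l (c : {ffun 'I_l -> 'I_d}) : (s + l <= N)%N ->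
  exists x, seg_prod (site_mx x) s (s + l) = block_tensor A l c.
Proof.
move=> slN; exists [ffun i : 'I_N => if insub (i - s)%N is Some k then
                       (if (s <= i)%N then c k else i0) else i0].
rewrite seg_prod_shift /block_tensor; apply: eq_bigr => k _.
have skN : (s + k < N)%N by have := ltn_ord k; lia.
by rewrite /site_mx insubT /= ffunE /= addKn leq_addr valK.
Qed.

Lemma injective_seg_prod s l : (s + l <= N)%N ->
  injective_tensor (block_tensor A l) <->
  injective_tensor (fun x : cfg => seg_prod (site_mx x) s (s + l)).
Proof.
move=> slN; split=> inj X X0; apply: inj.
  by move=> c; have [x <-] := block_tensor_seg_prod c slN; apply: X0.
by move=> x; rewrite seg_prod_site_mx_block //; apply: X0.
Qed.

Lemma seg_span_injective s l : (s + l <= N)%N -> injective_tensor (block_tensor A l) ->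
  forall Z, seg_span s (s + l) Z.
Proof. by move=> slN /(injective_seg_prod slN); apply: mxtrace_separating_span. Qed.

(* Write [Z = Z * 1] and expand [1] over the last window [e - l, e); what remains in front
   lies in the first window [s, s + l), which overlaps it. *)
Lemma seg_span_cover s l e : (s + l <= e <= s + l + l)%N -> (e <= N)%N ->
  injective_tensor (block_tensor A l) -> forall Z, seg_span s e Z.
Proof.
move=> /andP[sle ele] eN inj Z.
have elN : (e - l + l <= N)%N by lia.
have [al one] := seg_span_injective elN inj 1.
rewrite subnK in one; last by lia.
rewrite -[Z]mulr1 one mulr_sumr; under eq_bigr do rewrite -mulmxE -scalemxAr mulmxE.
apply: seg_span_sum => x.
rewrite (@seg_prod_cat _ (e - l) (s + l) e); last by lia.
rewrite mulrA; apply: (@seg_span_mul _ (s + l)); first by lia.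
  by apply: seg_span_injective => //; lia.
exact: seg_span_site_mx.
Qed.

Lemma realizable_pairing (P : pred nat) (B1 B2 : nat -> Mx) (p q : cfg -> C) :
  (forall Y, \sum_x p x * ring_tr (mask P (site_mx x) Y) = ring_tr (mask P B1 Y)) ->
  (forall X, \sum_y q y * ring_tr (mask (predC P) (site_mx y) X) =
             ring_tr (mask (predC P) B2 X)) ->
  \sum_x \sum_y p x * q y * ring_tr (mask P (site_mx x) (site_mx y)) =
  ring_tr (mask P B1 B2).
Proof.
move=> pB1 qB2; rewrite -pB1; apply: eq_bigr => x _.
rewrite -mask_predC -qB2 mulr_sumr; apply: eq_bigr => y _.
by rewrite mask_predC mulrA.
Qed.

Section Windows.
Variables (L : nat) (iD : 'I_D1).
Hypotheses (L0 : (0 < L)%N) (injL : injective_tensor (block_tensor A L)).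

Definition block_field (G : nat -> Mx) k : Mx := if (k %% L == 0)%N then G (k %/ L)%N else 1.

Definition alt_block m k := ((k %/ L < m) && ~~ odd (k %/ L))%N.

Lemma block_index t k : (t * L <= k < t.+1 * L)%N -> (k %/ L)%N = t.
Proof. by move=> /andP[lo hi]; apply/eqP; rewrite eqn_leq -ltnS ltn_divLR // hi leq_divRL. Qed.

Lemma block_field_in G t k : (t * L <= k < t.+1 * L)%N ->
  block_field G k = if k == (t * L)%N then G t else 1.
Proof.
move=> ktL; rewrite /block_field (block_index ktL) {2}(divn_eq k L) (block_index ktL).
by rewrite -{2}[(t * L)%N]addn0 eqn_add2l.
Qed.

Lemma seg_prod_block_field G m :
  seg_prod (block_field G) 0 (m * L) = \prod_(0 <= j < m) G j.
Proof.
elim: m => [|m IH]; first by rewrite /seg_prod !big_geq.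
have mL : (m * L < m.+1 * L)%N by rewrite ltn_mul2r L0 ltnSn.
rewrite (@seg_prod_cat _ 0 (m * L)) ?leq0n ?(ltnW mL) // IH big_nat_recr //=.
congr (_ * _).
rewrite /seg_prod big_ltn // (@block_field_in G m) ?leqnn // eqxx big1_seq ?mulr1 // => k.
rewrite mem_index_iota => /andP[_ /andP[mk km]].
by rewrite (@block_field_in G m) ?km ?(ltnW mk) //; case: eqP => //; lia.
Qed.

Lemma seg_span_block t Z : (t.+1 * L <= N)%N -> seg_span (t * L) (t.+1 * L) Z.
Proof. by rewrite mulSnr => tLN; apply: seg_span_injective. Qed.

Lemma realizable_blocks (P : pred nat) m G (T : nat -> Mx) : (m * L <= N)%N ->
  (forall t k, (t * L <= k < t.+1 * L)%N -> P k = P (t * L)%N) ->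
  (forall x, realizable P (fun k => if (k < m * L)%N then site_mx x k else T k)) ->
  realizable P (fun k => if (k < m * L)%N then block_field G k else T k).
Proof.
move=> mLN Pblock Tsite.
suff IH t : (t <= m)%N -> forall x, realizable P (fun k =>
    if (k < t * L)%N then block_field G k else if (k < m * L)%N then site_mx x k else T k).
  by apply: eq_realizable (IH m (leqnn m) ([ffun=> i0] : cfg)) => k _; case: (k < m * L)%N.
elim: t => [_ x|t IH tm x]; first by apply: eq_realizable (Tsite x) => k _; rewrite mul0n.
have tL : (t * L < t.+1 * L)%N by rewrite ltn_mul2r L0 ltnSn.
have tmL : (t.+1 * L <= m * L)%N by rewrite leq_mul2r tm orbT.
have [PtL|PtL] := boolP (P (t * L)%N); last first.
  apply: eq_realizable (IH (ltnW tm) x) => k Pk.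
  case: (ltnP k (t * L)) => [ktL|tLk]; first by rewrite (ltn_trans ktL tL).
  case: (ltnP k (t.+1 * L)) => // ktL.
  by move: Pk; rewrite (Pblock t) ?tLk ?ktL // (negbTE PtL).
set B := fun k => if (k < t * L)%N then block_field G k
  else if (k < m * L)%N then site_mx x k else T k.
have tLN : (t.+1 * L <= N)%N := leq_trans tmL mLN.
have segP k : (t * L <= k < t.+1 * L)%N -> P k by move=> ktL; rewrite (Pblock t).
have siteR x' : realizable P (fun k => if (t * L <= k < t.+1 * L)%N then site_mx x' k else B k).
  apply: eq_realizable (IH (ltnW tm) (patch (fun k => (t * L <= k < t.+1 * L)%N) x x')).
  move=> k _; rewrite site_mx_patch /=.
  case: (boolP (t * L <= k < t.+1 * L)%N) => [/andP[tLk ktL]|/negbTE nb]; last by [].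
  by rewrite ltnNge tLk /= (leq_trans ktL tmL) ?ktL.
have tLe : (t * L < t.+1 * L <= N)%N by rewrite tL tLN.
have := realizable_seg tLe segP siteR (seg_span_block (G t) tLN).
apply: eq_realizable => k _ /=; rewrite /B.
case: (boolP (t * L <= k < t.+1 * L)%N) => [/andP[tLk ktL]|/negbTE nb].
  by rewrite (@block_field_in G t k) ?tLk ?ktL.
by have -> : (k < t.+1 * L)%N = (k < t * L)%N by lia.
Qed.

Lemma alt_block_uniform m t k : (t * L <= k < t.+1 * L)%N ->
  alt_block m k = alt_block m (t * L).
Proof. by move=> ktL; rewrite /alt_block (block_index ktL) mulnK. Qed.

Lemma alt_blockE m k : (k < m * L)%N -> alt_block m k = ~~ odd (k %/ L).
Proof. by rewrite /alt_block ltn_divLR // => ->. Qed.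

Lemma alt_block_tail m k : (m * L <= k)%N -> alt_block m k = false.
Proof. by rewrite /alt_block ltn_divLR // ltnNge => ->. Qed.

Lemma realizable_row_chain m (lam : {ffun 'I_m.-1 -> 'I_D1}) x y : (m * L <= N)%N ->
  realizable (alt_block m) (block_field (row_link iD lam x y)).
Proof.
move=> mLN; pose x0 : cfg := [ffun=> i0].
have siteR x' : realizable (alt_block m)
    (fun k => if (k < m * L)%N then site_mx x' k else site_mx x0 k).
  apply: eq_realizable (realizable_site_mx _ (patch (fun k => (k < m * L)%N) x0 x')) => k _.
  by rewrite site_mx_patch.
apply: eq_realizable (realizable_blocks _ mLN (@alt_block_uniform m) siteR) => k.
by case: ltnP => // /alt_block_tail ->.
Qed.

Lemma realizable_col_chain m (mu : {ffun 'I_m.-1 -> 'I_D1}) (Zc : nat -> Mx) :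
  (m * L <= N)%N ->
  (forall x, realizable (predC (alt_block m))
     (fun k => if (k < m * L)%N then site_mx x k else Zc k)) ->
  realizable (predC (alt_block m))
    (fun k => if (k < m * L)%N then block_field (col_link iD mu) k else Zc k).
Proof.
move=> mLN; apply: realizable_blocks => // t k ktL.
by rewrite /= (alt_block_uniform m ktL).
Qed.

Lemma ring_tr_alt_chain m (lam mu : {ffun 'I_m.-1 -> 'I_D1}) x y (Zc : nat -> Mx) :
  odd m -> (m * L <= N)%N ->
  ring_tr (mask (alt_block m) (block_field (row_link iD lam x y))
    (fun k => if (k < m * L)%N then block_field (col_link iD mu) k else Zc k)) =
  (lam == mu)%:R * seg_prod Zc (m * L) N x y.
Proof.
move=> m_odd mLN; rewrite (@ring_tr_split _ (m * L) (m * L)) ?leqnn ?mLN //.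
rewrite {2}/seg_prod big_geq // mulr1; set Bm := mask _ _ _.
have -> : seg_prod Bm 0 (m * L) =
    \prod_(0 <= j < m) (if odd j then col_link iD mu j else row_link iD lam x y j).
  rewrite -seg_prod_block_field; apply: eq_seg_prod => k /= kmL.
  by rewrite /Bm /mask alt_blockE // kmL /block_field; case: (odd _); case: ifP.
have -> : seg_prod Bm (m * L) N = seg_prod Zc (m * L) N.
  by apply: eq_seg_prod => k /andP[mLk _]; rewrite /Bm /mask alt_block_tail // ltnNge mLk.
by rewrite alt_chain_prod // -mulmxE -scalemxAl mxtraceZ mxtrace_delta_mul.
Qed.

(* Rows are indexed by [(lam, a)] and columns by [(mu, b)]: a row realizes on [S] the
   even links of the chain through [lam] for every pair of ends and contracts them with [g a];
   a column realizes the odd links through [mu] followed by the tail [Zc b]. *)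
Lemma schmidt_rank_alt m (K : finType) (g : K -> Mx) (Zc : K -> nat -> Mx) :
  odd m -> (m * L <= N)%N ->
  (forall b x, realizable (predC (alt_block m))
     (fun k => if (k < m * L)%N then site_mx x k else Zc b k)) ->
  (forall a b, \tr (g a *m seg_prod (Zc b) (m * L) N) = (a == b)%:R) ->
  (D1 ^ m.-1 * #|K| <= schmidt_rank (ti_mps A N) [set i : 'I_N | alt_block m i])%N.
Proof.
move=> m_odd mLN tailR gZ.
pose Lam := {ffun 'I_m.-1 -> 'I_D1}.
have /choice[pr prR] (lxy : Lam * 'I_D1 * 'I_D1) :=
  realizable_row_chain lxy.1.1 lxy.1.2 lxy.2 mLN.
have /choice[qc qcR] (mb : Lam * K) := realizable_col_chain mb.1 mLN (tailR mb.2).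
pose p (la : Lam * K) X := \sum_(xy : 'I_D1 * 'I_D1) g la.2 xy.2 xy.1 * pr (la.1, xy.1, xy.2) X.
have SP (i : 'I_N) : (i \in [set i : 'I_N | alt_block m i]) = alt_block m i by rewrite inE.
have := schmidt_rank_ge_pairing (p := p) (q := qc) SP.
rewrite card_prod card_ffun !card_ord; apply=> -[lam a] [mu b] /=.
transitivity (\sum_(xy : 'I_D1 * 'I_D1) g a xy.2 xy.1 *
    ring_tr (mask (alt_block m) (block_field (row_link iD lam xy.1 xy.2))
      (fun k => if (k < m * L)%N then block_field (col_link iD mu) k else Zc b k))).
  rewrite /p; under eq_bigr do under eq_bigr do rewrite !mulr_suml.
  under eq_bigr do rewrite exchange_big /=.
  rewrite exchange_big /=; apply: eq_bigr => -[x y] _ /=.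
  rewrite -(realizable_pairing (prR (lam, x, y)) (qcR (mu, b))) mulr_sumr.
  by apply: eq_bigr => X _; rewrite mulr_sumr; apply: eq_bigr => Y _; rewrite !mulrA.
under eq_bigr => xy _ do rewrite ring_tr_alt_chain // mulrCA.
rewrite -mulr_sumr -(pair_bigA _ (fun x y => g a y x * seg_prod (Zc b) (m * L) N x y)).
rewrite -mxtrace_mul_sum gZ xpair_eqE.
by case: (lam == mu); case: (a == b); rewrite ?mulr1 ?mulr0.
Qed.

Lemma schmidt_rank_alt_exact m : odd m -> (m * L)%N = N ->
  (D1 ^ m.-1 <= schmidt_rank (ti_mps A N) [set i : 'I_N | alt_block m i])%N.
Proof.
move=> m_odd mLN.
have := @schmidt_rank_alt m unit (fun _ => delta_mx iD iD) (fun _ _ => 1) m_odd (eq_leq mLN).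
rewrite card_unit muln1; apply.
  move=> _ x; apply: eq_realizable (realizable_site_mx _ x) => k _.
  by case: ltnP => // kN; rewrite site_mx_out // -mLN.
by move=> [] []; rewrite mLN /seg_prod big_geq // mxtrace_delta_mul mxE eqxx.
Qed.

Lemma schmidt_rank_alt_long m : odd m -> (m * L + L <= N <= m * L + L + L)%N ->
  (D1 ^ m.-1 * (D1 * D1) <= schmidt_rank (ti_mps A N) [set i : 'I_N | alt_block m i])%N.
Proof.
move=> m_odd /andP[mLN NmL].
have mL_N : (m * L < N)%N by apply: leq_trans mLN; rewrite -addn1 leq_add2l.
pose Zc (xy : 'I_D1 * 'I_D1) k : Mx :=
  if (m * L <= k < N)%N then (if k == (m * L)%N then delta_mx xy.1 xy.2 else 1) else 1.
have := @schmidt_rank_alt m _ (fun xy => delta_mx xy.2 xy.1) Zc m_odd (ltnW mL_N).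
rewrite card_prod card_ord; apply.
- move=> xy x.
  have segC k : (m * L <= k < N)%N -> predC (alt_block m) k.
    by move=> /andP[mLk _]; rewrite /= alt_block_tail.
  have siteR x' : realizable (predC (alt_block m))
      (fun k => if (m * L <= k < N)%N then site_mx x' k else site_mx x k).
    apply: eq_realizable (realizable_site_mx _ (patch (fun k => (m * L <= k < N)%N) x x')).
    by move=> k _; rewrite site_mx_patch.
  have spanN := seg_span_cover (introT andP (conj mLN NmL)) (leqnn N) injL.
  apply: eq_realizable (realizable_seg (introT andP (conj mL_N (leqnn N))) segC siteR
    (spanN (delta_mx xy.1 xy.2))) => k _.
  rewrite /Zc; case: (ltnP k (m * L)) => //= _.
  by case: (ltnP k N) => // Nk; rewrite site_mx_out.
- by move=> [x y] [x' y']; rewrite seg_prod_start // mxtrace_delta_mul mxE xpair_eqE.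
Qed.

Lemma schmidt_rank_alt_pair m : odd m -> (m * L <= N)%N ->
  ~ proportional (fun x : cfg => seg_prod (site_mx x) (m * L) N) ->
  (D1 ^ m.-1 * 2 <= schmidt_rank (ti_mps A N) [set i : 'I_N | alt_block m i])%N.
Proof.
move=> m_odd mLN /not_proportional_dual_pair[x [g gW]].
have := @schmidt_rank_alt m bool g (fun b => site_mx (x b)) m_odd mLN.
rewrite card_bool; apply=> // b x'.
apply: eq_realizable (realizable_site_mx _ (patch (fun k => (k < m * L)%N) (x b) x')) => k _.
by rewrite site_mx_patch.
Qed.

(* If all products over the last [r] sites were multiples of one matrix, the window of
   length [L] ending at [N] could only be injective if its first [L - r] sites were. *)
Lemma tail_not_proportional r : (0 < r < L)%N -> (L <= N)%N ->
  ~ injective_tensor (block_tensor A (L - r)) ->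
  ~ proportional (fun x : cfg => seg_prod (site_mx x) (N - r) N).
Proof.
move=> /andP[r0 rL] LN noninj propW; apply: noninj.
have e1 : (N - L + (L - r) = N - r)%N by lia.
have e2 : (N - L + L = N)%N by lia.
have head : (N - L + (L - r) <= N)%N by lia.
apply/(injective_seg_prod head); rewrite e1.
apply: separating_proportional_factor propW => Y YPW.
have /(injective_seg_prod (eq_leq e2)) sepL := injL; apply: sepL => x.
by rewrite -(YPW x) e2 (@seg_prod_cat _ _ (N - r)) //; lia.
Qed.

Lemma exists_schmidt_rank_gt D :
  (forall l, (0 < l < L)%N -> ~ injective_tensor (block_tensor A l)) ->
  (2 <= D1)%N -> (L < N)%N -> (D ^ L < 2 ^ (N - L))%N ->
  exists S, (D < schmidt_rank (ti_mps A N) S)%N.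
Proof.
move=> minL D1_2 LN DL.
have pow2 k : (2 ^ k <= D1 ^ k)%N by elim: k => // k IH; rewrite !expnS leq_mul.
set q := (N %/ L)%N; set r := (N %% L)%N.
have Nqr : N = (q * L + r)%N by rewrite /q /r -divn_eq.
have rL : (r < L)%N by rewrite /r ltn_pmod.
have [q' qE] : exists q', q = q'.+1.
  by exists q.-1; rewrite prednK // /q divn_gt0 // ltnW.
have DL2 k : (N - L <= k * L)%N -> (D < 2 ^ k)%N.
  move=> NLk; rewrite -(ltn_exp2r _ _ L0) -expnM.
  by apply: leq_trans DL _; rewrite leq_exp2l.
have Dq : (D < 2 ^ q)%N by apply: DL2; rewrite Nqr qE mulSn; lia.
case q_odd : (odd q).
  have [r0|r0] := posnP r.
    have Dq' : (D < 2 ^ q')%N by apply: DL2; rewrite Nqr qE r0 mulSn; lia.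
    exists [set i : 'I_N | alt_block q i].
    apply: leq_trans Dq' (leq_trans (pow2 _) _).
    have -> : q' = q.-1 by rewrite qE.
    by apply: schmidt_rank_alt_exact; rewrite // Nqr r0 addn0.
  have tail := tail_not_proportional (introT andP (conj r0 rL)) (ltnW LN) (minL _ _).
  have Nr : (N - r = q * L)%N by rewrite {1}Nqr addnK.
  rewrite Nr in tail.
  exists [set i : 'I_N | alt_block q i].
  apply: leq_trans Dq (leq_trans _ (schmidt_rank_alt_pair q_odd _ (tail _))).
  - by rewrite qE expnSr leq_mul2r pow2 orbT.
  - by rewrite Nqr leq_addr.
  - lia.
have q'_odd : odd q' by move: q_odd; rewrite qE /= => /negbFE.
exists [set i : 'I_N | alt_block q' i].
apply: leq_trans Dq (leq_trans _ (schmidt_rank_alt_long q'_odd _)).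
  by rewrite qE; case: (q') q'_odd => // k _; rewrite /= mulnA -!expnSr.
by rewrite Nqr qE mulSn; lia.
Qed.

End Windows.
End TIState.

Lemma log2_bound_nat (R : realType) (L N D : nat) : (0 < L)%N -> (0 < D)%N ->
  (N%:R : R) > L%:R * (log2 (D%:R : R) + 1) -> (L < N)%N /\ (D ^ L < 2 ^ (N - L))%N.
Proof.
move=> L0 D0 NLD.
have ln2 : 0 < ln (2 : R) by apply: ln_gt0; rewrite ltr1n.
have lnD : 0 <= ln (D%:R : R) by apply: ln_ge0; rewrite ler1n.
have LN : (L < N)%N.
  rewrite -(ltr_nat R); apply: le_lt_trans NLD.
  by rewrite -{1}[L%:R]mulr1 ler_wpM2l // lerDr /log2 divr_ge0 // ltW.
split=> //.
rewrite -(ltr_nat R) -(ltr_ln (R := R)); last 2 first.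
- by rewrite posrE ltr0n expn_gt0 D0.
- by rewrite posrE ltr0n expn_gt0.
have hD : 0 < (D%:R : R) by rewrite ltr0n.
have h2 : 0 < (2%:R : R) by rewrite ltr0n.
rewrite !natrX (lnXn _ hD) (lnXn _ h2) -[ln _ *+ L]mulr_natr -[ln 2 *+ _]mulr_natr.
rewrite (natrB _ (ltnW LN)).
move: NLD; rewrite mulrDr mulr1 -ltrBrDr /log2 mulrA ltr_pdivrMr //.
by rewrite mulrC [ln 2 * _]mulrC.
Qed.

Lemma prod_mx11 (F : comNzRingType) (I : finType) (M : I -> 'M[F]_1) :
  \prod_i M i = (\prod_i M i 0 0)%:M.
Proof.
elim/big_rec2: _ => [|i y1 y2 _ ->]; first by [].
by rewrite {1}[M i]mx11_scalar -mulmxE -scalar_mxM.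
Qed.

Theorem proposition1 (R : realType) (d D1 : nat) (A : tensor R d D1)
    (LI N D : nat) :
  normal_tensor A ->
  injectivity_length A LI ->
  (0 < D)%N ->
  exact_MPS_up (ti_mps A N) D ->
  (N%:R : R) > LI%:R * (log2 (D%:R : R) + 1) ->
  is_product_power (ti_mps A N).
Proof.
move=> [_ [[X X0 _] _]] [LI0 injLI minLI] D0 upD NLD.
have [LIN DLI] := log2_bound_nat LI0 D0 NLD.
case: d A X X0 injLI minLI upD => [|d] A X X0 injLI minLI upD.
  by exists (fun=> 0) => c; case: (c (Ordinal (leq_ltn_trans (leq0n _) LIN))).
case: D1 A X X0 injLI minLI upD => [|[|D1]] A X X0 injLI minLI upD.
- by move: X0; rewrite flatmx0 eqxx.
- by exists (fun i => A i 0 0) => c; rewrite /ti_mps prod_mx11 mxtrace_scalar.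
have [S DS] := exists_schmidt_rank_gt ord0 ord0 LI0 injLI minLI isT LIN DLI.
by have := upD S; rewrite leqNgt DS.
Qed.
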